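(* Let $\sigma^2>0$, $0<\dot R<\frac{1}{2\sigma^2}$ and $0<\epsilon<1$. For each integer $\mathsf{M}\ge 2$, set $\xi=\sqrt{\log\mathsf{M}/\dot R}$ and $\Upsilon=\xi-\sigma Q^{-1}(\epsilon)$. Consider the pulse-position modulation scheme of block length $n=\mathsf{M}$ in which message $m\in\{1,\dots,\mathsf{M}\}$ is mapped to $x_k(m)=\xi$ if $k=m$ and $x_k(m)=0$ otherwise (so the energy is $\mathsf{E}=\xi^2=\log\mathsf{M}/\dot R$); the one-bit quantizer with region $\{\tilde y\ge\Upsilon\}$ is used, i.e. $Y_k=1$ if $x_k+Z_k\ge\Upsilon$ and $Y_k=-1$ otherwise, with $Z_k$ i.i.d. $\mathcal{N}(0,\sigma^2)$; and the decoder outputs $\hat M=m$ if $Y_m=1$ and $Y_k=-1$ for all $k\neq m$, and declares an error otherwise. Then the error probability satisfies $$\Pr(\hat M\neq M)\le (\mathsf{M}-1)\,Q\!\left(\frac{\xi-\sigma Q^{-1}(\epsilon)}{\sigma}\right)+\epsilon,$$ and $\limsup_{\mathsf{M}\to\infty}\Pr(\hat M\neq M)\le\epsilon$. Consequently every rate per unit-energy $\dot R<\frac{1}{2\sigma^2}$ is achievable by such PPM schemes with threshold quantizers.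
   Context: $Q(x)=\frac{1}{\sqrt{2\pi}}\int_x^\infty e^{-t^2/2}\,dt$ and $Q^{-1}$ is its inverse; $\log$ is natural. The message $M$ is uniform on $\{1,\dots,\mathsf{M}\}$. A rate per unit-energy $\dot R$ is achievable if for every $\epsilon'>0$ there exist an encoder with $\sum_k x_k^2\le\mathsf{E}$ for every message, a quantization region and a decoder with $\log\mathsf{M}/\mathsf{E}>\dot R-\epsilon'$ and $\Pr(\hat M\neq M)\to0$ as $\mathsf{E}\to\infty$. *)

From Stdlib Require Import Reals Lra Lia List Arith.
Import ListNotations.
Open Scope R_scope.

Definition gauss_pdf (t : R) : R := / sqrt (2 * PI) * exp (- (t ^ 2) / 2).

(** [gauss_tail x l] : the improper Riemann integral
    int_x^infty gauss_pdf(t) dt converges to l, i.e. l = Q(x). *)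
Definition gauss_tail (x l : R) : Prop :=
  forall eps : R, 0 < eps ->
    exists B : R, forall b : R, B <= b ->
      forall pr : Riemann_integrable gauss_pdf x b,
        Rabs (RiemannInt pr - l) < eps.

Definition lsum {A : Type} (f : A -> R) (l : list A) : R :=
  fold_right Rplus 0 (map f l).

(** All output sign vectors of length n (true = +1, false = -1). *)
Fixpoint bools (n : nat) : list (list bool) :=
  match n with
  | O => [[]]
  | S n' => map (cons true) (bools n') ++ map (cons false) (bools n')
  end.

(** A coding scheme with a one-bit threshold quantizer.
    Messages are indexed 0..Msz-1 (the paper's 1..M shifted by one),
    coordinates 0..blen-1. Y_k = +1 (true) iff x_k + Z_k >= thr. *)
Record scheme := mkScheme {
  blen : nat;
  Msz : nat;
  cw : nat -> nat -> R;            (* cw m k = x_k(m) *)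
  thr : R;
  dec : list bool -> option nat    (* None = declared error *)
}.

(** Probability of the output vector y given input xs, with Z_k iid N(0,sigma^2):
    Pr(x + Z >= thr) = Pr(Z/sigma >= (thr - x)/sigma) = Q((thr - x)/sigma). *)
Fixpoint prob_out (Q : R -> R) (sigma th : R) (xs : list R) (y : list bool) : R :=
  match xs, y with
  | x :: xs', b :: y' =>
      (if b then Q ((th - x) / sigma) else 1 - Q ((th - x) / sigma))
        * prob_out Q sigma th xs' y'
  | [], [] => 1
  | _, _ => 0
  end.

Definition codeword (s : scheme) (m : nat) : list R :=
  map (cw s m) (seq 0 (blen s)).

Definition perr_m (Q : R -> R) (sigma : R) (s : scheme) (m : nat) : R :=
  1 - lsum (fun y => match dec s y with
                     | Some m' => if Nat.eqb m' m
                                  then prob_out Q sigma (thr s) (codeword s m) y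
                                  else 0
                     | None => 0 end)
           (bools (blen s)).

Definition perr (Q : R -> R) (sigma : R) (s : scheme) : R :=
  / INR (Msz s) * lsum (perr_m Q sigma s) (seq 0 (Msz s)).

Definition energy_ok (s : scheme) (E : R) : Prop :=
  forall m, (m < Msz s)%nat -> lsum (fun k => cw s m k ^ 2) (seq 0 (blen s)) <= E.

Definition ppm_dec (y : list bool) : option nat :=
  match filter (fun k => nth k y false) (seq 0 (length y)) with
  | [m] => Some m
  | _ => None
  end.

Definition ppm (M : nat) (xi ups : R) : scheme :=
  mkScheme M M (fun m k => if Nat.eqb k m then xi else 0) ups ppm_dec.

Definition is_ppm (s : scheme) : Prop :=
  exists xi ups : R, s = ppm (Msz s) xi ups.

Definition xi_of (Rdot : R) (M : nat) : R := sqrt (ln (INR M) / Rdot).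

Definition ppm_thm (sigma Rdot qinv : R) (M : nat) : scheme :=
  ppm M (xi_of Rdot M) (xi_of Rdot M - sigma * qinv).

(** Achievability of rate per unit-energy Rdot using schemes satisfying P
    (codes indexed by the energy E > 0, error probability -> 0 as E -> oo). *)
Definition achievable_by (P : scheme -> Prop) (Q : R -> R) (sigma Rdot : R) : Prop :=
  forall eps' : R, 0 < eps' ->
    exists code : R -> scheme,
      (forall E : R, 0 < E ->
         P (code E) /\ (1 <= Msz (code E))%nat /\ energy_ok (code E) E /\
         ln (INR (Msz (code E))) / E > Rdot - eps') /\
      (forall d : R, 0 < d -> exists E0 : R, forall E : R, E0 <= E ->
         Rabs (perr Q sigma (code E)) < d).

(* Decoding fails only if the pulse position falls below the threshold or one of the other
   M - 1 positions exceeds it, so by the union bound the error probability is at most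
   (M - 1) Q(Upsilon/sigma) + Q((xi - Upsilon)/sigma); for Upsilon = xi - sigma Q^-1(eps) the
   second term is exactly eps.  Writing x = xi/sigma, log M = Rdot sigma^2 x^2 with
   Rdot sigma^2 < 1/2, so the Gaussian tail bound Q(x) <= exp(-x^2/2) drives the first term to 0.
   For achievability the threshold is instead a fixed fraction lam of the pulse, chosen so that
   both terms vanish as the energy grows.
   The symmetry Q(-x) = 1 - Q(x) needs the Gaussian integral, obtained by showing that
   (int_0^x phi)^2 + (1/pi) int_0^1 exp(-x^2 (1+t^2)/2) / (1+t^2) dt has zero derivative. *)

From Stdlib Require Import Reals Lra Lia List ZArith.
From Coquelicot Require Import Coquelicot.
Import ListNotations.
Open Scope R_scope.

Lemma lsum_cons {A : Type} (f : A -> R) (a : A) (l : list A) :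
  lsum f (a :: l) = f a + lsum f l.
Proof. reflexivity. Qed.

Lemma lsum_app {A : Type} (f : A -> R) (l1 l2 : list A) :
  lsum f (l1 ++ l2) = lsum f l1 + lsum f l2.
Proof. unfold lsum. rewrite map_app, fold_right_app. induction l1; simpl; lra. Qed.

Lemma lsum_map {A B : Type} (f : B -> R) (g : A -> B) (l : list A) :
  lsum f (map g l) = lsum (fun a => f (g a)) l.
Proof. unfold lsum. rewrite map_map. reflexivity. Qed.

Lemma lsum_scal_l {A : Type} (c : R) (f : A -> R) (l : list A) :
  lsum (fun a => c * f a) l = c * lsum f l.
Proof. induction l as [|a l IH]; [unfold lsum; simpl; ring | rewrite !lsum_cons, IH; ring]. Qed.

Lemma lsum_ext {A : Type} (f g : A -> R) (l : list A) :
  (forall a, In a l -> f a = g a) -> lsum f l = lsum g l.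
Proof. intros H. unfold lsum. f_equal. apply map_ext_in, H. Qed.

Lemma lsum_le {A : Type} (f g : A -> R) (l : list A) :
  (forall a, In a l -> f a <= g a) -> lsum f l <= lsum g l.
Proof.
  induction l as [|a l IH]; intros H; [unfold lsum; simpl; lra |].
  rewrite !lsum_cons. apply Rplus_le_compat; [apply H, in_eq |].
  apply IH. intros x Hx. apply H, in_cons, Hx.
Qed.

Lemma lsum_const {A : Type} (c : R) (l : list A) : lsum (fun _ => c) l = INR (length l) * c.
Proof.
  induction l as [|a l IH]; [unfold lsum; simpl; ring |].
  rewrite lsum_cons, IH. simpl length. rewrite S_INR. ring.
Qed.

Lemma lsum_nonneg {A : Type} (f : A -> R) (l : list A) :
  (forall a, In a l -> 0 <= f a) -> 0 <= lsum f l.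
Proof. intros H. rewrite <- (Rmult_0_r (INR (length l))), <- lsum_const. apply lsum_le, H. Qed.

Lemma lsum_ge_term {A : Type} (f : A -> R) (l : list A) (a : A) :
  (forall a, In a l -> 0 <= f a) -> In a l -> f a <= lsum f l.
Proof.
  induction l as [|b l IH]; intros Hf Ha; [destruct Ha |].
  rewrite lsum_cons. destruct Ha as [-> | Ha].
  - pose proof (lsum_nonneg f l (fun x Hx => Hf x (in_cons _ _ _ Hx))). lra.
  - pose proof (Hf b (in_eq _ _)). pose proof (IH (fun x Hx => Hf x (in_cons _ _ _ Hx)) Ha). lra.
Qed.

Lemma lsum_indicator_notin (A B : R) (m : nat) (l : list nat) :
  ~ In m l -> lsum (fun k => if k =? m then A else B) l = INR (length l) * B.
Proof.
  intros Hm. rewrite <- lsum_const. apply lsum_ext. intros k Hk.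
  destruct (Nat.eqb_spec k m); [subst; contradiction | reflexivity].
Qed.

Lemma lsum_indicator (A B : R) (m : nat) (l : list nat) :
  NoDup l -> In m l ->
  lsum (fun k => if k =? m then A else B) l = A - B + INR (length l) * B.
Proof.
  induction l as [|k l IH]; intros Hnd Hm; [destruct Hm |].
  inversion Hnd as [|? ? Hk Hnd']; subst. rewrite lsum_cons. simpl length. rewrite S_INR.
  destruct (Nat.eqb_spec k m) as [-> | Hne].
  - rewrite lsum_indicator_notin by exact Hk. ring.
  - destruct Hm as [Hm | Hm]; [contradiction |]. rewrite IH by assumption. ring.
Qed.

Lemma filter_eqb_singleton (m : nat) (l : list nat) :
  NoDup l -> In m l -> filter (fun k => k =? m) l = [m].
Proof.
  induction l as [|k l IH]; intros Hnd Hm; [destruct Hm |].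
  inversion Hnd as [|? ? Hk Hnd']; subst. simpl.
  destruct (Nat.eqb_spec k m) as [-> | Hne].
  - f_equal. rewrite <- (filter_false l). apply filter_ext_in. intros k Hk'.
    destruct (Nat.eqb_spec k m); [subst; contradiction | reflexivity].
  - destruct Hm as [Hm | Hm]; [contradiction |]. apply IH; assumption.
Qed.

Lemma In_bools (y : list bool) : In y (bools (length y)).
Proof.
  induction y as [|b y IH]; simpl; [left; reflexivity |].
  apply in_or_app. destruct b; [left | right]; apply in_map, IH.
Qed.

Lemma length_codeword (s : scheme) (m : nat) : length (codeword s m) = blen s.
Proof. unfold codeword. rewrite length_map, length_seq. reflexivity. Qed.

Section ThresholdChannel.

Variable Q : R -> R.
Hypothesis HQ01 : forall x, 0 <= Q x <= 1.
Variables sigma th : R.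

Definition out_prob (x : R) (b : bool) : R :=
  if b then Q ((th - x) / sigma) else 1 - Q ((th - x) / sigma).

Lemma out_prob_range (x : R) (b : bool) : 0 <= out_prob x b <= 1.
Proof. pose proof (HQ01 ((th - x) / sigma)). destruct b; simpl; lra. Qed.

Lemma prob_out_range (xs : list R) (y : list bool) : 0 <= prob_out Q sigma th xs y <= 1.
Proof.
  revert y. induction xs as [|x xs IH]; intros [|b y]; simpl; try lra.
  change (0 <= out_prob x b * prob_out Q sigma th xs y <= 1).
  pose proof (out_prob_range x b). pose proof (IH y). nra.
Qed.

Lemma prob_out_total (xs : list R) : lsum (prob_out Q sigma th xs) (bools (length xs)) = 1.
Proof.
  induction xs as [|x xs IH]; [unfold lsum; simpl; ring |].
  simpl. rewrite lsum_app, !lsum_map; simpl.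
  rewrite !lsum_scal_l, IH. ring.
Qed.

Lemma prob_out_union_bound {A : Type} (f : A -> R) (g : A -> bool) (l : list A) :
  1 - lsum (fun k => 1 - out_prob (f k) (g k)) l
    <= prob_out Q sigma th (map f l) (map g l).
Proof.
  induction l as [|k l IH]; [unfold lsum; simpl; lra |].
  rewrite lsum_cons. simpl.
  change ((if g k then _ else _) * _)
    with (out_prob (f k) (g k) * prob_out Q sigma th (map f l) (map g l)).
  pose proof (out_prob_range (f k) (g k)).
  pose proof (prob_out_range (map f l) (map g l)). nra.
Qed.

End ThresholdChannel.

Section ErrorProbability.

Variable Q : R -> R.
Hypothesis HQ01 : forall x, 0 <= Q x <= 1.
Variable sigma : R.

Definition correct_prob (s : scheme) (m : nat) (y : list bool) : R :=
  match dec s y with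
  | Some m' => if m' =? m then prob_out Q sigma (thr s) (codeword s m) y else 0
  | None => 0
  end.

Lemma correct_prob_range (s : scheme) (m : nat) (y : list bool) :
  0 <= correct_prob s m y <= prob_out Q sigma (thr s) (codeword s m) y.
Proof.
  pose proof (prob_out_range Q HQ01 sigma (thr s) (codeword s m) y).
  unfold correct_prob. destruct (dec s y) as [m'|]; [destruct (m' =? m)|]; lra.
Qed.

Lemma perr_m_nonneg (s : scheme) (m : nat) : 0 <= perr_m Q sigma s m.
Proof.
  unfold perr_m. fold (correct_prob s m).
  rewrite <- (prob_out_total Q sigma (thr s) (codeword s m)), length_codeword.
  enough (lsum (correct_prob s m) (bools (blen s))
          <= lsum (prob_out Q sigma (thr s) (codeword s m)) (bools (blen s))) by lra.
  apply lsum_le. intros y _. apply correct_prob_range.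
Qed.

Lemma perr_m_le_decoded (s : scheme) (m : nat) (y : list bool) :
  length y = blen s -> dec s y = Some m ->
  perr_m Q sigma s m <= 1 - prob_out Q sigma (thr s) (codeword s m) y.
Proof.
  intros Hlen Hdec. unfold perr_m. fold (correct_prob s m).
  enough (prob_out Q sigma (thr s) (codeword s m) y
          <= lsum (correct_prob s m) (bools (blen s))) by lra.
  replace (prob_out Q sigma (thr s) (codeword s m) y) with (correct_prob s m y)
    by (unfold correct_prob; rewrite Hdec, Nat.eqb_refl; reflexivity).
  apply lsum_ge_term; [intros; apply correct_prob_range |].
  rewrite <- Hlen. apply In_bools.
Qed.

Lemma perr_nonneg (s : scheme) : 0 <= perr Q sigma s.
Proof.
  unfold perr. apply Rmult_le_pos.
  - destruct (Msz s) as [|n]; [simpl; rewrite Rinv_0; lra |].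
    apply Rlt_le, Rinv_0_lt_compat, lt_0_INR. lia.
  - apply lsum_nonneg. intros; apply perr_m_nonneg.
Qed.

Lemma perr_le_uniform (s : scheme) (bnd : R) :
  (1 <= Msz s)%nat -> (forall m, (m < Msz s)%nat -> perr_m Q sigma s m <= bnd) ->
  perr Q sigma s <= bnd.
Proof.
  intros HM Hm. unfold perr.
  assert (HMpos : 0 < INR (Msz s)) by (apply lt_0_INR; lia).
  apply Rle_trans with (/ INR (Msz s) * lsum (fun _ => bnd) (seq 0 (Msz s))).
  - apply Rmult_le_compat_l; [apply Rlt_le, Rinv_0_lt_compat, HMpos |].
    apply lsum_le. intros m Hin. apply in_seq in Hin. apply Hm. lia.
  - rewrite lsum_const, length_seq. right. field. lra.
Qed.

End ErrorProbability.

Definition pulse_pattern (M m : nat) : list bool := map (fun k => k =? m) (seq 0 M).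

Lemma length_pulse_pattern (M m : nat) : length (pulse_pattern M m) = M.
Proof. unfold pulse_pattern. rewrite length_map, length_seq. reflexivity. Qed.

Lemma ppm_dec_pulse_pattern (M m : nat) : (m < M)%nat -> ppm_dec (pulse_pattern M m) = Some m.
Proof.
  intros Hm. unfold ppm_dec. rewrite length_pulse_pattern.
  rewrite (filter_ext_in _ (fun k => k =? m)).
  - rewrite filter_eqb_singleton; [reflexivity | apply seq_NoDup | apply in_seq; lia].
  - intros k Hk. apply in_seq in Hk. unfold pulse_pattern.
    rewrite (nth_indep _ false (0 =? m)) by (rewrite length_map, length_seq; lia).
    rewrite (map_nth (fun k => k =? m)), seq_nth by lia. reflexivity.
Qed.

Lemma ppm_perr_le (Q : R -> R) (sigma : R) (M : nat) (xi ups : R) :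
  (forall x, 0 <= Q x <= 1) -> (1 <= M)%nat ->
  perr Q sigma (ppm M xi ups)
    <= (INR M - 1) * Q (ups / sigma) + (1 - Q ((ups - xi) / sigma)).
Proof.
  intros HQ01 HM. apply perr_le_uniform; [exact HM |]. intros m Hm. simpl in Hm.
  eapply Rle_trans.
  { apply (perr_m_le_decoded Q HQ01 sigma _ m (pulse_pattern M m)).
    - apply length_pulse_pattern.
    - apply ppm_dec_pulse_pattern, Hm. }
  simpl thr. unfold codeword, pulse_pattern. simpl.
  pose proof (prob_out_union_bound Q HQ01 sigma ups
                (fun k => if k =? m then xi else 0) (fun k => k =? m) (seq 0 M)) as Hunion.
  rewrite (lsum_ext _ (fun k => if k =? m then 1 - Q ((ups - xi) / sigma) else Q (ups / sigma)))
    in Hunion.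
  2:{ intros k _. unfold out_prob. destruct (k =? m); [| rewrite Rminus_0_r]; ring. }
  rewrite lsum_indicator, length_seq in Hunion by (apply seq_NoDup || (apply in_seq; lia)).
  lra.
Qed.

Ltac continuity_by_derive :=
  apply (ex_derive_continuous (K := R_AbsRing) (V := R_NormedModule)); auto_derive.

Lemma sqrt_2PI_pos : 0 < sqrt (2 * PI).
Proof. apply sqrt_lt_R0. pose proof PI_RGT_0; lra. Qed.

Lemma exp_le_exp (x y : R) : x <= y -> exp x <= exp y.
Proof. intros [Hlt | ->]; [apply Rlt_le, exp_increasing, Hlt | apply Rle_refl]. Qed.

Lemma gauss_pdf_pos (t : R) : 0 < gauss_pdf t.
Proof.
  apply Rmult_lt_0_compat; [apply Rinv_0_lt_compat, sqrt_2PI_pos | apply exp_pos].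
Qed.

Lemma gauss_pdf_continuous (t : R) : continuous gauss_pdf t.
Proof. unfold gauss_pdf; continuity_by_derive; easy. Qed.

Lemma ex_RInt_gauss_pdf (a b : R) : ex_RInt gauss_pdf a b.
Proof.
  apply (ex_RInt_continuous (V := R_CompleteNormedModule)); intros; apply gauss_pdf_continuous.
Qed.

Lemma gauss_pdf_opp (t : R) : gauss_pdf (- t) = gauss_pdf t.
Proof. unfold gauss_pdf. replace ((- t) ^ 2) with (t ^ 2) by ring. reflexivity. Qed.

Lemma is_lim_gauss_tail (x l : R) :
  gauss_tail x l -> is_lim (fun b => RInt gauss_pdf x b) p_infty l.
Proof.
  intros Htail. apply is_lim_spec. intros eps.
  destruct (Htail eps (cond_pos eps)) as [B HB].
  exists (Rmax B x). intros b Hb.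
  assert (pr : Riemann_integrable gauss_pdf x b)
    by (apply ex_RInt_Reals_0, ex_RInt_gauss_pdf).
  rewrite (RInt_Reals _ _ _ pr). apply HB.
  pose proof (Rmax_l B x); lra.
Qed.

Definition gauss_aux (x t : R) : R := exp (- x ^ 2 * (1 + t ^ 2) / 2) / (1 + t ^ 2).

Definition gauss_aux_int (x : R) : R := RInt (gauss_aux x) 0 1.

Lemma one_plus_sqr_pos (t : R) : 0 < 1 + t ^ 2.
Proof. nra. Qed.

Definition gauss_aux_dx (x t : R) : R := - x * exp (- x ^ 2 * (1 + t ^ 2) / 2).

Lemma gauss_aux_continuous (x t : R) : continuous (gauss_aux x) t.
Proof. unfold gauss_aux; continuity_by_derive. pose proof (one_plus_sqr_pos t); lra. Qed.

Lemma ex_RInt_gauss_aux (x a b : R) : ex_RInt (gauss_aux x) a b.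
Proof.
  apply (ex_RInt_continuous (V := R_CompleteNormedModule)); intros; apply gauss_aux_continuous.
Qed.

Lemma is_derive_gauss_aux (x t : R) : is_derive (fun u => gauss_aux u t) x (gauss_aux_dx x t).
Proof.
  unfold gauss_aux, gauss_aux_dx. auto_derive.
  - pose proof (one_plus_sqr_pos t); lra.
  - change (x ^ 2) with (x * (x * 1)); change (t ^ 2) with (t * (t * 1)); unfold Rdiv.
    pose proof (one_plus_sqr_pos t); field; lra.
Qed.

Lemma gauss_aux_dx_continuous (x t : R) : continuity_2d_pt gauss_aux_dx x t.
Proof.
  apply continuity_2d_pt_ext with
    (fun u v => (- u) * exp (- (u * (u * 1)) * (1 + v * (v * 1)) * / 2)).
  { reflexivity. }
  apply continuity_2d_pt_mult.
  - apply continuity_2d_pt_opp, continuity_2d_pt_id1.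
  - apply continuity_1d_2d_pt_comp.
    + apply derivable_continuous_pt, derivable_pt_exp.
    + repeat first [ apply continuity_2d_pt_mult | apply continuity_2d_pt_plus
                   | apply continuity_2d_pt_opp | apply continuity_2d_pt_id1
                   | apply continuity_2d_pt_id2 | apply continuity_2d_pt_const ].
Qed.

Lemma RInt_gauss_aux_dx (x : R) :
  RInt (gauss_aux_dx x) 0 1 = - 2 * PI * gauss_pdf x * RInt gauss_pdf 0 x.
Proof.
  pose proof sqrt_2PI_pos as Hs.
  assert (Hs2 : sqrt (2 * PI) * sqrt (2 * PI) = 2 * PI)
    by (apply sqrt_sqrt; pose proof PI_RGT_0; lra).
  set (c := - exp (- x ^ 2 / 2) * sqrt (2 * PI)).
  transitivity (RInt (fun t => c * (x * gauss_pdf (x * t + 0))) 0 1).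
  { apply RInt_ext. intros t _. change (gauss_aux_dx x t = c * (x * gauss_pdf (x * t + 0))).
    unfold c, gauss_aux_dx, gauss_pdf.
    replace (- x ^ 2 * (1 + t ^ 2) / 2) with (- x ^ 2 / 2 + - (x * t + 0) ^ 2 / 2) by field.
    rewrite exp_plus. field. lra. }
  transitivity (c * RInt (fun t => x * gauss_pdf (x * t + 0)) 0 1).
  { apply (RInt_scal (V := R_CompleteNormedModule)).
    apply (ex_RInt_continuous (V := R_CompleteNormedModule)). intros t _.
    unfold gauss_pdf; continuity_by_derive. easy. }
  change (RInt (fun t => x * gauss_pdf (x * t + 0)) 0 1)
    with (RInt (fun t => scal x (gauss_pdf (x * t + 0))) 0 1).
  rewrite (RInt_comp_lin (V := R_CompleteNormedModule)) by apply ex_RInt_gauss_pdf.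
  replace (x * 0 + 0) with 0 by ring. replace (x * 1 + 0) with x by ring.
  match goal with |- ?a = ?b => change (@eq R a b) end.
  change (gauss_pdf x) with (/ sqrt (2 * PI) * exp (- x ^ 2 / 2)).
  replace (- 2 * PI) with (- (sqrt (2 * PI) * sqrt (2 * PI))) by lra.
  unfold c. field. lra.
Qed.

Lemma gauss_aux_int_derive (x : R) :
  is_derive gauss_aux_int x (- 2 * PI * gauss_pdf x * RInt gauss_pdf 0 x).
Proof.
  rewrite <- RInt_gauss_aux_dx.
  replace (RInt (gauss_aux_dx x) 0 1)
    with (RInt (fun t => Derive (fun u => gauss_aux u t) x) 0 1).
  2:{ apply RInt_ext. intros t _. apply is_derive_unique, is_derive_gauss_aux. }
  apply (is_derive_RInt_param gauss_aux).
  - apply filter_forall. intros y t _. eexists. apply is_derive_gauss_aux.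
  - intros t _. apply continuity_2d_pt_ext with gauss_aux_dx.
    + intros u v. symmetry. apply is_derive_unique, is_derive_gauss_aux.
    + apply gauss_aux_dx_continuous.
  - apply filter_forall. intros y. apply ex_RInt_gauss_aux.
Qed.

Lemma gauss_aux_bounds (x : R) : 0 <= gauss_aux_int x <= exp (- x ^ 2 / 2).
Proof.
  assert (Hpt : forall t, 0 <= gauss_aux x t <= exp (- x ^ 2 / 2)).
  { intros t. pose proof (one_plus_sqr_pos t). unfold gauss_aux. split.
    - apply Rlt_le, Rdiv_lt_0_compat; [apply exp_pos | lra].
    - apply Rle_trans with (exp (- x ^ 2 * (1 + t ^ 2) / 2)).
      + apply Rmult_le_reg_r with (1 + t ^ 2); [lra|].
        unfold Rdiv at 1. rewrite Rmult_assoc, Rinv_l by lra.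
        pose proof (exp_pos (- x ^ 2 * (1 + t ^ 2) / 2)). nra.
      + apply exp_le_exp. pose proof (pow2_ge_0 x); pose proof (pow2_ge_0 t); nra. }
  unfold gauss_aux_int. split.
  - apply RInt_ge_0; [lra | apply ex_RInt_gauss_aux | intros; apply Hpt].
  - apply Rle_trans with (RInt (fun _ => exp (- x ^ 2 / 2)) 0 1).
    + apply RInt_le; [lra | apply ex_RInt_gauss_aux | apply ex_RInt_const | intros; apply Hpt].
    + rewrite RInt_const. unfold scal; simpl; unfold mult; simpl. lra.
Qed.

Lemma gauss_aux_int_0 : gauss_aux_int 0 = PI / 4.
Proof.
  unfold gauss_aux_int.
  rewrite (RInt_ext _ (fun t => / (1 + t²))).
  2:{ intros t _. change (gauss_aux 0 t = / (1 + t²)). unfold gauss_aux, Rsqr.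
      replace (- 0 ^ 2 * (1 + t ^ 2) / 2) with 0 by field. rewrite exp_0.
      replace (t ^ 2) with (t * t) by ring. unfold Rdiv. ring. }
  rewrite (is_RInt_unique _ 0 1 (minus (atan 1) (atan 0))).
  - unfold minus, plus, opp; simpl. rewrite atan_1, atan_0. lra.
  - apply (is_RInt_derive (V := R_CompleteNormedModule)).
    + intros t _. apply is_derive_atan.
    + intros t _. continuity_by_derive. unfold Rsqr. nra.
Qed.

Lemma RInt_gauss_pdf_sqr (x : R) :
  (RInt gauss_pdf 0 x) ^ 2 = / 4 - gauss_aux_int x / PI.
Proof.
  pose proof PI_RGT_0 as HPI.
  set (h y := (RInt gauss_pdf 0 y) ^ 2 + / PI * gauss_aux_int y).
  assert (Hd : forall y, is_derive h y 0).
  { intros y.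
    assert (H : is_derive h y (INR 2 * gauss_pdf y * RInt gauss_pdf 0 y ^ pred 2
                               + / PI * (- 2 * PI * gauss_pdf y * RInt gauss_pdf 0 y))).
    2:{ assert (E : INR 2 * gauss_pdf y * RInt gauss_pdf 0 y ^ pred 2
                    + / PI * (- 2 * PI * gauss_pdf y * RInt gauss_pdf 0 y) = 0)
          by (simpl; field; lra).
        rewrite E in H. exact H. }
    unfold h. apply (is_derive_plus (K := R_AbsRing) (V := R_NormedModule)).
    - apply is_derive_pow, is_derive_RInt with 0.
      + apply filter_forall. intros b.
        apply (RInt_correct (V := R_CompleteNormedModule)), ex_RInt_gauss_pdf.
      + apply gauss_pdf_continuous.
    - apply is_derive_scal, gauss_aux_int_derive. }
  assert (Hconst : h x = h 0).
  { destruct (Rtotal_order x 0) as [Hx | [-> | Hx]].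
    - apply eq_is_derive; [intros; apply Hd | lra].
    - reflexivity.
    - symmetry. apply eq_is_derive; [intros; apply Hd | lra]. }
  unfold h in Hconst. rewrite RInt_point, gauss_aux_int_0 in Hconst.
  simpl in Hconst. unfold zero in Hconst; simpl in Hconst.
  assert (HP : / PI * (PI / 4) = / 4) by (field; lra). lra.
Qed.

Lemma RInt_gauss_pdf_opp (x : R) : RInt gauss_pdf 0 (- x) = - RInt gauss_pdf 0 x.
Proof.
  assert (H := RInt_comp_lin (V := R_CompleteNormedModule) gauss_pdf (-1) 0 0 x
                 (ex_RInt_gauss_pdf _ _)).
  replace (-1 * 0 + 0) with 0 in H by ring. replace (-1 * x + 0) with (- x) in H by ring.
  rewrite <- H, (RInt_ext _ (fun t => -1 * gauss_pdf t)).
  - rewrite (RInt_scal (V := R_CompleteNormedModule)) by apply ex_RInt_gauss_pdf.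
    unfold scal; simpl; unfold mult; simpl. ring.
  - intros t _. unfold scal; simpl; unfold mult; simpl.
    replace (-1 * t + 0) with (- t) by ring. rewrite gauss_pdf_opp. reflexivity.
Qed.

Lemma RInt_gauss_pdf_le_exp (x b : R) : 1 <= x <= b -> RInt gauss_pdf x b <= exp (- x ^ 2 / 2).
Proof.
  intros Hxb.
  assert (Hmoment : RInt (fun t => t * gauss_pdf t) x b = gauss_pdf x - gauss_pdf b).
  { rewrite (is_RInt_unique (fun t => t * gauss_pdf t) x b
               (minus (- gauss_pdf b) (- gauss_pdf x))).
    - unfold minus, plus, opp; simpl. ring.
    - apply (is_RInt_derive (V := R_CompleteNormedModule) (fun t => - gauss_pdf t)).
      + intros t _. unfold gauss_pdf. auto_derive; [easy |].
        change (t ^ 2) with (t * (t * 1)); unfold Rdiv.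
        match goal with |- ?a = ?b => change (@eq R a b) end.
        pose proof sqrt_2PI_pos. field. lra.
      + intros t _. unfold gauss_pdf. continuity_by_derive. easy. }
  apply Rle_trans with (RInt (fun t => t * gauss_pdf t) x b).
  - apply RInt_le; [lra | apply ex_RInt_gauss_pdf | |].
    + apply (ex_RInt_continuous (V := R_CompleteNormedModule)). intros t _.
      unfold gauss_pdf. continuity_by_derive. easy.
    + intros t Ht. pose proof (gauss_pdf_pos t). nra.
  - rewrite Hmoment. pose proof (gauss_pdf_pos b).
    assert (gauss_pdf x <= exp (- x ^ 2 / 2)).
    { unfold gauss_pdf. pose proof (exp_pos (- x ^ 2 / 2)).
      assert (/ sqrt (2 * PI) <= 1).
      { rewrite <- Rinv_1. apply Rinv_le_contravar; [lra |].
        rewrite <- sqrt_1. apply sqrt_le_1_alt. pose proof PI2_1; lra. }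
      nra. }
    lra.
Qed.

Section GaussianTail.

Variable Q : R -> R.
Hypothesis HQ : forall x : R, gauss_tail x (Q x).

Lemma Q_is_lim (x : R) : is_lim (fun b => RInt gauss_pdf x b) p_infty (Q x).
Proof. apply is_lim_gauss_tail, HQ. Qed.

Lemma Q_sub (x y : R) : Q x - Q y = RInt gauss_pdf x y.
Proof.
  assert (H : is_lim (fun b => RInt gauss_pdf x y + RInt gauss_pdf y b) p_infty
                (RInt gauss_pdf x y + Q y)).
  { apply (is_lim_plus _ _ _ (RInt gauss_pdf x y) (Q y)).
    - apply is_lim_const.
    - apply Q_is_lim.
    - reflexivity. }
  apply (is_lim_ext _ (fun b => RInt gauss_pdf x b)) in H.
  2:{ intros b. apply (RInt_Chasles (V := R_CompleteNormedModule)); apply ex_RInt_gauss_pdf. }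
  apply is_lim_unique in H. rewrite (is_lim_unique _ _ _ (Q_is_lim x)) in H.
  injection H. lra.
Qed.

Lemma Q_ge0 (x : R) : 0 <= Q x.
Proof.
  apply (is_lim_le_loc (fun _ => 0) (fun b => RInt gauss_pdf x b) p_infty 0 (Q x)).
  - exists x. intros b Hb. apply RInt_ge_0; [lra | apply ex_RInt_gauss_pdf |].
    intros; apply Rlt_le, gauss_pdf_pos.
  - apply is_lim_const.
  - apply Q_is_lim.
Qed.

Lemma is_lim_exp_neg_sqr : is_lim (fun b => exp (- b ^ 2 / 2)) p_infty 0.
Proof.
  apply (is_lim_comp exp (fun b => - b ^ 2 / 2) p_infty 0 m_infty).
  - apply is_lim_exp_m.
  - apply is_lim_spec. intros M. exists (Rabs M + 1). intros b Hb.
    pose proof (Rabs_pos M); pose proof (Rle_abs (- M)); rewrite Rabs_Ropp in *. nra.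
  - exists 0. intros b _. discriminate.
Qed.

Lemma Q_0 : Q 0 = / 2.
Proof.
  pose proof PI_RGT_0.
  assert (Hquarter : is_lim (fun b => RInt gauss_pdf 0 b ^ 2) p_infty (/ 4)).
  { apply (is_lim_le_le_loc (fun b => / 4 - / PI * exp (- b ^ 2 / 2)) (fun _ => / 4)).
    - exists 0. intros b _. rewrite RInt_gauss_pdf_sqr.
      pose proof (gauss_aux_bounds b).
      assert (0 < / PI) by (apply Rinv_0_lt_compat; lra). unfold Rdiv. nra.
    - replace (Finite (/ 4)) with (Rbar_plus (/ 4) (Rbar_opp (Rbar_mult (/ PI) 0)))
        by (simpl; f_equal; ring).
      apply (is_lim_plus _ _ _ (/ 4) (Rbar_opp (Rbar_mult (/ PI) 0)));
        [apply is_lim_const | | reflexivity].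
      apply is_lim_opp, is_lim_scal_l, is_lim_exp_neg_sqr.
    - apply is_lim_const. }
  assert (Hsqr : is_lim (fun b => RInt gauss_pdf 0 b ^ 2) p_infty (Q 0 * Q 0)).
  { apply (is_lim_ext (fun b => RInt gauss_pdf 0 b * RInt gauss_pdf 0 b)).
    { intros b; ring. }
    apply (is_lim_mult _ _ _ (Q 0) (Q 0)); [apply Q_is_lim | apply Q_is_lim | exact I]. }
  apply is_lim_unique in Hquarter. rewrite (is_lim_unique _ _ _ Hsqr) in Hquarter.
  injection Hquarter as Hq. pose proof (Q_ge0 0). nra.
Qed.

Lemma Q_opp (x : R) : Q (- x) = 1 - Q x.
Proof.
  pose proof (Q_sub (- x) 0) as H1. pose proof (Q_sub 0 x) as H2.
  rewrite <- (opp_RInt_swap (V := R_CompleteNormedModule)), RInt_gauss_pdf_opp in H1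
    by apply ex_RInt_gauss_pdf.
  unfold opp in H1; simpl in H1. rewrite Q_0 in *. lra.
Qed.

Lemma Q_le1 (x : R) : Q x <= 1.
Proof. pose proof (Q_opp x). pose proof (Q_ge0 (- x)). lra. Qed.

Lemma Q_le_exp (x : R) : 1 <= x -> Q x <= exp (- x ^ 2 / 2).
Proof.
  intros Hx.
  apply (is_lim_le_loc (fun b => RInt gauss_pdf x b) (fun _ => exp (- x ^ 2 / 2)) p_infty
           (Q x) (exp (- x ^ 2 / 2))).
  - exists x. intros b Hb. apply RInt_gauss_pdf_le_exp. lra.
  - apply Q_is_lim.
  - apply is_lim_const.
Qed.

Lemma exp_sqr_mul_Q_eventually_le (a k c d : R) :
  0 < k -> a < k ^ 2 / 2 -> 0 < d ->
  exists X, forall x, X <= x -> exp (a * x ^ 2) * Q (k * (x - c)) <= d.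
Proof.
  intros Hk Ha Hd. set (b := k ^ 2 / 2) in *.
  set (X := 1 + Rabs c + / k + (2 * b * Rabs c + Rabs (ln d)) / (b - a)).
  exists X. intros x Hx.
  pose proof (Rle_abs c). pose proof (Rabs_pos c).
  pose proof (Rabs_pos (ln d)). pose proof (Rle_abs (- ln d)). rewrite Rabs_Ropp in *.
  assert (Hb : 0 < b) by (unfold b; nra).
  assert (Hslope : 0 <= (2 * b * Rabs c + Rabs (ln d)) / (b - a))
    by (apply Rdiv_le_0_compat; nra).
  assert (Hik : 0 < / k) by (apply Rinv_0_lt_compat, Hk).
  assert (Hx1 : 1 <= x) by (unfold X in Hx; lra).
  assert (Hbig : 2 * b * Rabs c + Rabs (ln d) <= (b - a) * x).
  { apply Rle_trans with ((b - a) * ((2 * b * Rabs c + Rabs (ln d)) / (b - a))).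
    - right. field. lra.
    - apply Rmult_le_compat_l; [lra | unfold X in Hx; lra]. }
  assert (Harg : 1 <= k * (x - c)).
  { replace 1 with (k * / k) by (field; lra).
    apply Rmult_le_compat_l; [lra | unfold X in Hx; lra]. }
  apply Rle_trans with (exp (a * x ^ 2) * exp (- (k * (x - c)) ^ 2 / 2)).
  { apply Rmult_le_compat_l; [apply Rlt_le, exp_pos | apply Q_le_exp, Harg]. }
  rewrite <- exp_plus, <- (exp_ln d Hd). apply exp_le_exp.
  replace (a * x ^ 2 + - (k * (x - c)) ^ 2 / 2)
    with (- (b - a) * x ^ 2 + 2 * b * c * x - b * c ^ 2) by (unfold b; field).
  assert (0 <= b * c ^ 2) by (pose proof (pow2_ge_0 c); nra).
  assert ((2 * b * Rabs c + Rabs (ln d)) * x <= (b - a) * x * x)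
    by (apply Rmult_le_compat_r; lra).
  assert (b * c * x <= b * Rabs c * x) by (apply Rmult_le_compat_r; [lra | nra]).
  assert (Rabs (ln d) <= Rabs (ln d) * x) by nra.
  replace (x ^ 2) with (x * x) by ring. lra.
Qed.

Lemma Q_range (x : R) : 0 <= Q x <= 1.
Proof. split; [apply Q_ge0 | apply Q_le1]. Qed.

End GaussianTail.

Lemma INR_up_nat (e : R) : 0 < e -> e < INR (Z.to_nat (up e)) <= e + 1.
Proof.
  intros He. destruct (archimed e) as [H1 H2].
  rewrite INR_IZR_INZ, Z2Nat.id by (apply le_IZR; lra). lra.
Qed.

Lemma xi_of_sqr (Rdot : R) (M : nat) :
  0 < Rdot -> (1 <= M)%nat -> Rdot * xi_of Rdot M ^ 2 = ln (INR M).
Proof.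
  intros HR HM. unfold xi_of. rewrite pow2_sqrt; [field; lra |].
  apply Rdiv_le_0_compat; [| exact HR].
  rewrite <- ln_1. apply ln_le; [lra | apply (le_INR 1), HM].
Qed.

Lemma ppm_energy (M m : nat) (xi ups : R) : (m < M)%nat ->
  lsum (fun k => cw (ppm M xi ups) m k ^ 2) (seq 0 (blen (ppm M xi ups))) = xi ^ 2.
Proof.
  intros Hm. simpl.
  rewrite (lsum_ext _ (fun k => if k =? m then xi ^ 2 else 0)).
  - rewrite lsum_indicator; [ring | apply seq_NoDup | apply in_seq; lia].
  - intros k _. destruct (k =? m); ring.
Qed.

Definition ppm_code (r lam E : R) : scheme :=
  ppm (Z.to_nat (up (exp (r * E)))) (sqrt E) (lam * sqrt E).

Lemma ppm_code_Msz (r lam E : R) :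
  exp (r * E) < INR (Msz (ppm_code r lam E)) <= exp (r * E) + 1.
Proof. apply INR_up_nat, exp_pos. Qed.

Lemma ppm_code_Msz_ge1 (r lam E : R) : (1 <= Msz (ppm_code r lam E))%nat.
Proof.
  pose proof (ppm_code_Msz r lam E). pose proof (exp_pos (r * E)).
  apply (INR_lt 0). change (INR 0) with 0. lra.
Qed.

Lemma ppm_code_energy (r lam E : R) : 0 <= E -> energy_ok (ppm_code r lam E) E.
Proof. intros HE m Hm. unfold ppm_code. rewrite ppm_energy by exact Hm. rewrite pow2_sqrt; lra. Qed.

Lemma ppm_code_rate (r lam E : R) : 0 < E -> r < ln (INR (Msz (ppm_code r lam E))) / E.
Proof.
  intros HE. destruct (ppm_code_Msz r lam E) as [HM _].
  apply Rmult_lt_reg_r with E; [exact HE |].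
  unfold Rdiv. rewrite Rmult_assoc, Rinv_l, Rmult_1_r by lra.
  rewrite <- (ln_exp (r * E)) at 1. apply ln_increasing; [apply exp_pos | exact HM].
Qed.

Section PPMAnalysis.

Variable Q : R -> R.
Hypothesis HQ : forall x : R, gauss_tail x (Q x).
Variable sigma : R.
Hypothesis Hsigma : 0 < sigma.

Lemma ppm_perr_le_Q (M : nat) (xi ups : R) : (1 <= M)%nat ->
  perr Q sigma (ppm M xi ups) <= (INR M - 1) * Q (ups / sigma) + Q ((xi - ups) / sigma).
Proof.
  intros HM. replace ((xi - ups) / sigma) with (- ((ups - xi) / sigma)) by (field; lra).
  rewrite (Q_opp Q HQ). apply ppm_perr_le; [exact (Q_range Q HQ) | exact HM].
Qed.

Lemma perr_ppm_thm_le (Rdot qinv : R) (M : nat) : (1 <= M)%nat ->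
  perr Q sigma (ppm_thm sigma Rdot qinv M)
    <= (INR M - 1) * Q ((xi_of Rdot M - sigma * qinv) / sigma) + Q qinv.
Proof.
  intros HM. unfold ppm_thm. eapply Rle_trans; [apply ppm_perr_le_Q, HM |].
  replace ((xi_of Rdot M - (xi_of Rdot M - sigma * qinv)) / sigma) with qinv by (field; lra).
  lra.
Qed.

(* With [x = xi / sigma] one has [M = exp (beta x^2)], and [beta < 1/2]
   since [Rdot < 1/(2 sigma^2)]. *)
Lemma perr_ppm_thm_limsup (Rdot qinv : R) :
  0 < Rdot -> Rdot < 1 / (2 * sigma ^ 2) ->
  forall d, 0 < d -> exists N : nat, forall M : nat, (N <= M)%nat ->
    perr Q sigma (ppm_thm sigma Rdot qinv M) <= Q qinv + d.
Proof.
  intros HR HRlt d Hd.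
  assert (Hs2 : 0 < sigma ^ 2) by (apply pow_lt; lra).
  set (beta := Rdot * sigma ^ 2).
  assert (Hbeta : 0 < beta < 1 ^ 2 / 2).
  { unfold beta. split; [apply Rmult_lt_0_compat; lra |].
    apply Rmult_lt_compat_r with (r := sigma ^ 2) in HRlt; [| lra].
    replace (1 / (2 * sigma ^ 2) * sigma ^ 2) with (1 ^ 2 / 2) in HRlt by (field; lra). lra. }
  destruct (exp_sqr_mul_Q_eventually_le Q HQ beta 1 qinv d ltac:(lra) (proj2 Hbeta) Hd)
    as [X HX].
  set (X0 := Rmax X 0).
  destruct (INR_unbounded (exp (beta * X0 ^ 2))) as [N HN].
  exists N. intros M HNM. apply le_INR in HNM.
  assert (HMpos : 0 < INR M) by (pose proof (exp_pos (beta * X0 ^ 2)); lra).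
  assert (HM : (1 <= M)%nat) by (apply (INR_lt 0) in HMpos; lia).
  set (x := xi_of Rdot M / sigma).
  assert (Hx : beta * x ^ 2 = ln (INR M)).
  { rewrite <- (xi_of_sqr Rdot M) by assumption. unfold x, beta. field. lra. }
  assert (HXx : X <= x).
  { assert (Hx0 : 0 <= x) by (apply Rdiv_le_0_compat; [apply sqrt_pos | lra]).
    assert (HlnM : beta * X0 ^ 2 < beta * x ^ 2).
    { rewrite Hx, <- (ln_exp (beta * X0 ^ 2)). apply ln_increasing; [apply exp_pos | lra]. }
    assert (HX0 : 0 <= X0) by apply Rmax_r.
    assert (X0 ^ 2 < x ^ 2) by (apply Rmult_lt_reg_l with beta; lra).
    apply Rle_trans with X0; [apply Rmax_l | nra]. }
  eapply Rle_trans; [apply perr_ppm_thm_le, HM |].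
  rewrite (Rplus_comm (Q qinv)). apply Rplus_le_compat_r.
  apply Rle_trans with (exp (beta * x ^ 2) * Q (1 * (x - qinv))); [| apply HX, HXx].
  rewrite Hx, exp_ln by exact HMpos.
  replace ((xi_of Rdot M - sigma * qinv) / sigma) with (1 * (x - qinv)) by (unfold x; field; lra).
  pose proof (Q_ge0 Q HQ (1 * (x - qinv))). nra.
Qed.

(* The false-alarm term is [exp (r E) Q (lam x)] and the miss term is [Q ((1 - lam) x)],
   where [x = sqrt E / sigma], i.e. [E = sigma^2 x^2]. *)
Lemma ppm_code_perr_vanishes (r lam : R) :
  0 < lam < 1 -> r * sigma ^ 2 < lam ^ 2 / 2 ->
  forall d, 0 < d -> exists E0, forall E, E0 <= E -> Rabs (perr Q sigma (ppm_code r lam E)) < d.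
Proof.
  intros Hlam Hr d Hd.
  destruct (exp_sqr_mul_Q_eventually_le Q HQ (r * sigma ^ 2) lam 0 (d / 3)
              ltac:(lra) Hr ltac:(lra)) as [X1 HX1].
  destruct (exp_sqr_mul_Q_eventually_le Q HQ 0 (1 - lam) 0 (d / 3)
              ltac:(lra) ltac:(nra) ltac:(lra)) as [X2 HX2].
  set (X := Rmax (Rmax X1 X2) 0).
  assert (HX : X1 <= X /\ X2 <= X /\ 0 <= X).
  { unfold X. pose proof (Rmax_l X1 X2). pose proof (Rmax_r X1 X2).
    pose proof (Rmax_l (Rmax X1 X2) 0). pose proof (Rmax_r (Rmax X1 X2) 0). lra. }
  exists (sigma ^ 2 * X ^ 2 + 1). intros E HE.
  assert (Hs2 : 0 < sigma ^ 2) by (apply pow_lt; lra).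
  assert (HEpos : 0 < E) by nra.
  set (x := sqrt E / sigma).
  assert (Hx2 : sigma ^ 2 * x ^ 2 = E).
  { unfold x. replace (sigma ^ 2 * (sqrt E / sigma) ^ 2) with (sqrt E ^ 2) by (field; lra).
    apply pow2_sqrt. lra. }
  assert (HXx : X <= x).
  { assert (0 <= x) by (apply Rdiv_le_0_compat; [apply sqrt_pos | lra]).
    assert (X ^ 2 < x ^ 2) by (apply Rmult_lt_reg_l with (sigma ^ 2); lra). nra. }
  destruct (ppm_code_Msz r lam E) as [_ HM].
  rewrite Rabs_pos_eq by (apply perr_nonneg, (Q_range Q HQ)).
  eapply Rle_lt_trans; [apply ppm_perr_le_Q, (ppm_code_Msz_ge1 r lam E) |].
  replace (lam * sqrt E / sigma) with (lam * (x - 0)) by (unfold x; field; lra).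
  replace ((sqrt E - lam * sqrt E) / sigma) with ((1 - lam) * (x - 0)) by (unfold x; field; lra).
  specialize (HX1 x ltac:(lra)). specialize (HX2 x ltac:(lra)).
  rewrite Rmult_0_l, exp_0, Rmult_1_l in HX2.
  replace (r * sigma ^ 2 * x ^ 2) with (r * E) in HX1 by (rewrite <- Hx2; ring).
  pose proof (Q_ge0 Q HQ (lam * (x - 0))). simpl Msz in HM |- *. nra.
Qed.

(* [Rd] may be negative: the codes use the rate [r = max Rd 0] and a threshold at the fraction
   [lam] of the pulse, with [2 r sigma^2 < lam^2 < 1]. *)
Lemma ppm_achievable (Rd : R) : Rd < 1 / (2 * sigma ^ 2) -> achievable_by is_ppm Q sigma Rd.
Proof.
  intros HRd eps' Heps'.
  assert (Hs2 : 0 < sigma ^ 2) by (apply pow_lt; lra).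
  set (r := Rmax Rd 0).
  assert (Hr : Rd <= r /\ 0 <= r) by (split; [apply Rmax_l | apply Rmax_r]).
  assert (Hr2 : 0 <= 2 * r * sigma ^ 2 < 1).
  { assert (Hr' : r < 1 / (2 * sigma ^ 2)).
    { apply Rmax_lub_lt; [exact HRd | apply Rdiv_lt_0_compat; lra]. }
    apply Rmult_lt_compat_r with (r := 2 * sigma ^ 2) in Hr'; [| lra].
    replace (1 / (2 * sigma ^ 2) * (2 * sigma ^ 2)) with 1 in Hr' by (field; lra).
    split; [apply Rmult_le_pos |]; lra. }
  set (lam := sqrt ((1 + 2 * r * sigma ^ 2) / 2)).
  assert (Hlam2 : lam ^ 2 = (1 + 2 * r * sigma ^ 2) / 2) by (apply pow2_sqrt; lra).
  assert (Hlam : 0 < lam < 1).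
  { assert (0 < lam) by (apply sqrt_lt_R0; lra). split; nra. }
  exists (ppm_code r lam). split.
  - intros E HE. split; [exists (sqrt E), (lam * sqrt E); reflexivity |].
    split; [apply ppm_code_Msz_ge1 |]. split; [apply ppm_code_energy; lra |].
    pose proof (ppm_code_rate r lam E HE). lra.
  - apply ppm_code_perr_vanishes; [exact Hlam | lra].
Qed.

End PPMAnalysis.

Theorem mainTheorem2 (Q : R -> R) (HQ : forall x : R, gauss_tail x (Q x))
  (sigma Rdot eps qinv : R)
  (Hsigma : 0 < sigma) (HRpos : 0 < Rdot) (HRlt : Rdot < 1 / (2 * sigma ^ 2))
  (Heps : 0 < eps < 1) (Hqinv : Q qinv = eps) :
  (forall M : nat, (2 <= M)%nat ->
     perr Q sigma (ppm_thm sigma Rdot qinv M)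
       <= (INR M - 1) * Q ((xi_of Rdot M - sigma * qinv) / sigma) + eps)
  /\ (forall d : R, 0 < d -> exists N : nat, forall M : nat, (N <= M)%nat ->
        perr Q sigma (ppm_thm sigma Rdot qinv M) <= eps + d)
  /\ (forall Rd : R, Rd < 1 / (2 * sigma ^ 2) -> achievable_by is_ppm Q sigma Rd).
Proof.
  subst eps. split; [| split].
  - intros M HM. apply perr_ppm_thm_le; [exact HQ | exact Hsigma | lia].
  - apply perr_ppm_thm_limsup; assumption.
  - apply ppm_achievable; assumption.
Qed.
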